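(* For any $F\in\mathscr{F}_2$ and $i\in[F]$: (i) for any $s\in\mathcal{S}$, with $f_i(s)=\gamma(s_1)\cdots\gamma(s_\rho)$ the $\gamma$-decomposition, $|\ddot{\gamma}(s_r)|=|\gamma(s_r)|$ for all $r=1,\dots,\rho$; (ii) $|\ddot{f}_i(s)|=|f_i(s)|$ for all $s\in\mathcal{S}$; (iii) for any $s,s'\in\mathcal{S}$, $f_i(s)\preceq f_i(s')$ if and only if $\ddot{f}_i(s)\preceq\ddot{f}_i(s')$.
   Context: $\mathcal{S}$ is a finite source alphabet with $|\mathcal{S}|\ge 2$ and $\mathcal{C}=\{0,1\}$; $\mathcal{A}^k,\mathcal{A}^{\ast},\mathcal{A}^{+}$ are sequences of length $k$, finite, positive finite length; $\lambda$ empty sequence; $\preceq$ prefix, $\prec$ proper prefix; $\mathrm{suff}(x_1\cdots x_n)=x_2\cdots x_n$; $\bar{c}=1-c$ for $c\in\mathcal{C}$. A code-tuple $F$ with $m\ge1$ code tables consists of maps $f_i:\mathcal{S}\to\mathcal{C}^{\ast}$ and $\tau_i:\mathcal{S}\to\{0,\dots,m-1\}$, $i\in[F]=\{0,\dots,m-1\}$. $f_i^{\ast}(\lambda)=\lambda$, $f_i^{\ast}(\pmb{x})=f_i(x_1)f^{\ast}_{\tau_i(x_1)}(\mathrm{suff}(\pmb{x}))$. For integer $k\ge0$, $\pmb{b}\in\mathcal{C}^{\ast}$: $\mathcal{P}^k_{F,i}(\pmb{b})$ is the set of $\pmb{c}\in\mathcal{C}^k$ such that some $\pmb{x}=x_1\cdots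 x_n\in\mathcal{S}^{+}$ has $f_i^{\ast}(\pmb{x})\succeq\pmb{b}\pmb{c}$ and $f_i(x_1)\succeq\pmb{b}$; $\bar{\mathcal{P}}^k_{F,i}(\pmb{b})$ the same with $f_i(x_1)\succ\pmb{b}$; $\mathcal{P}^k_{F,i}=\mathcal{P}^k_{F,i}(\lambda)$. $F\in\mathscr{F}_{2\text{-}\mathrm{dec}}$ if $\mathcal{P}^2_{F,\tau_i(s)}\cap\bar{\mathcal{P}}^2_{F,i}(f_i(s))=\emptyset$ for all $i,s$, and $\mathcal{P}^2_{F,\tau_i(s)}\cap\mathcal{P}^2_{F,\tau_i(s')}=\emptyset$ whenever $s\ne s'$, $f_i(s)=f_i(s')$. Fix $\mu:\mathcal{S}\to(0,1]$ with $\sum_s\mu(s)=1$; $Q_{i,j}(F)=\sum_{s:\tau_i(s)=j}\mu(s)$; $F\in\mathscr{F}_{\mathrm{reg}}$ if $\pmb{\pi}Q(F)=\pmb{\pi}$, $\sum_i\pi_i=1$ has a unique solution. $\mathscr{F}_2=\{F\in\mathscr{F}_{\mathrm{reg}}\cap\mathscr{F}_{2\text{-}\mathrm{dec}}:|\mathcal{P}^2_{F,i}|\ge3\ \forall i\in[F]\}$ (every such $F$ satisfies $\mathcal{P}^1_{F,i}=\{0,1\}$ for all $i$). $\gamma$-decomposition: for $F\in\mathscr{F}_2$, $i\in[F]$, $s\in\mathcal{S}$, the symbols $s'$ with $f_i(s')\prec f_i(s)$ have pairwise distinct codewords; list them together with $s$ as $s_1,\dots,s_\rho$ with $s_\rho=s$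 and $f_i(s_1)\prec\cdots\prec f_i(s_\rho)$; set $\gamma(s_1)=f_i(s_1)$ and $f_i(s_r)=f_i(s_{r-1})\gamma(s_r)$ for $r\ge2$. The code-tuple $\ddot{F}$: $\ddot{\tau}_i=\tau_i$ and $\ddot{f}_i(s)=\ddot{\gamma}(s_1)\cdots\ddot{\gamma}(s_\rho)$ where, writing $\gamma(s_r)=g_1g_2\cdots g_l$: $\ddot{\gamma}(s_r)=\gamma(s_r)$ if $r=1$ and $|\mathcal{P}^2_{F,i}|=4$; $\ddot{\gamma}(s_r)=1$ if $r=1$, $|\mathcal{P}^2_{F,i}|=3$, $|\gamma(s_r)|=1$; $\ddot{\gamma}(s_r)=01g_3\cdots g_l$ if $r=1$, $|\mathcal{P}^2_{F,i}|=3$, $|\gamma(s_r)|\ge2$, $g_1\bar{g_2}\notin\mathcal{P}^2_{F,i}$; $\ddot{\gamma}(s_r)=1g_2g_3\cdots g_l$ if $r=1$, $|\mathcal{P}^2_{F,i}|=3$, $|\gamma(s_r)|\ge2$, $g_1\bar{g_2}\in\mathcal{P}^2_{F,i}$; $\ddot{\gamma}(s_r)=00g_3\cdots g_l$ if $r\ge2$. *)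

From HB Require Import structures.
From mathcomp Require Import all_boot all_order all_algebra.
From mathcomp Require Import boolp reals.
Set Implicit Arguments. Unset Strict Implicit. Unset Printing Implicit Defensive.
Import Order.TTheory GRing.Theory Num.Theory.

(* Code alphabet C = {0,1} is rendered as bool (false = 0, true = 1);
   codewords are seq bool; prefix is seq's [prefix]. *)

Record codeTuple (S : finType) (m : nat) := CodeTuple {
  ct_f : 'I_m -> S -> seq bool;
  ct_tau : 'I_m -> S -> 'I_m }.

Section Defs.
Variables (S : finType) (m : nat).
Implicit Types (F : codeTuple S m) (i : 'I_m).

Fixpoint fstar F i (x : seq S) : seq bool :=
  if x is a :: x' then ct_f F i a ++ fstar F (ct_tau F i a) x' else [::].

Definition Pset F i (k : nat) (b c : seq bool) : Prop :=
  size c = k /\ exists (a : S) (x : seq S),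
    prefix (b ++ c) (fstar F i (a :: x)) /\ prefix b (ct_f F i a).

Definition Pbar F i (k : nat) (b c : seq bool) : Prop :=
  size c = k /\ exists (a : S) (x : seq S),
    prefix (b ++ c) (fstar F i (a :: x)) /\
    (prefix b (ct_f F i a) && (b != ct_f F i a)).

Definition card_P2 F i : nat :=
  #|[set c : bool * bool | `[< Pset F i 2 [::] [:: c.1; c.2] >]]|.

Definition dec2 F : Prop :=
  (forall i (s : S) (c : seq bool),
      ~ (Pset F (ct_tau F i s) 2 [::] c /\ Pbar F i 2 (ct_f F i s) c)) /\
  (forall i (s s' : S), s != s' -> ct_f F i s = ct_f F i s' ->
     forall c : seq bool,
      ~ (Pset F (ct_tau F i s) 2 [::] c /\ Pset F (ct_tau F i s') 2 [::] c)).

Definition Qmx (R : realType) (mu : S -> R) F : 'M[R]_m :=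
  (\matrix_(i, j) \sum_(s | ct_tau F i s == j) mu s)%R.

Definition regular (R : realType) (mu : S -> R) F : Prop :=
  exists! pi : 'rV[R]_m, (pi *m Qmx mu F = pi /\ \sum_j pi 0 j = 1)%R.

Definition inF2 (R : realType) (mu : S -> R) F : Prop :=
  regular mu F /\ dec2 F /\ forall i, (3 <= card_P2 F i)%N.

(* gamma-decomposition of f_i(s): the chain of codewords
   f_i(s_1) < ... < f_i(s_rho) = f_i(s), i.e. all codewords f_i(s') that are
   proper prefixes of f_i(s), followed by f_i(s), sorted by length. *)
Definition gchain F i (s : S) : seq (seq bool) :=
  sort (fun u v : seq bool => size u <= size v)
    (undup [seq ct_f F i s' | s' <- enum S &
              prefix (ct_f F i s') (ct_f F i s) && (ct_f F i s' != ct_f F i s)])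
  ++ [:: ct_f F i s].

(* the pieces gamma(s_1), ..., gamma(s_rho):
   gamma(s_1) = f_i(s_1), f_i(s_r) = f_i(s_{r-1}) gamma(s_r) *)
Definition gpieces F i (s : S) : seq (seq bool) :=
  pairmap (fun u v : seq bool => drop (size u) v) [::] (gchain F i s).

(* \ddot gamma(s_r), with r 0-indexed (r = 0 is the paper's r = 1) *)
Definition ddgamma F i (r : nat) (g : seq bool) : seq bool :=
  if r == 0 then
    if card_P2 F i == 4 then g
    else if card_P2 F i == 3 then
      match g with
      | [::] => g
      | [:: _] => [:: true]
      | g1 :: g2 :: _ =>
          if `[< Pset F i 2 [::] [:: g1; ~~ g2] >] then true :: behead g
          else [:: false; true] ++ drop 2 g
      end
    else g
  else [:: false; false] ++ drop 2 g.

Definition ddf F i (s : S) : seq bool :=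
  let gs := gpieces F i s in
  flatten [seq ddgamma F i r (nth [::] gs r) | r <- iota 0 (size gs)].

End Defs.

From HB Require Import structures.
From mathcomp Require Import all_boot all_order all_algebra.
From mathcomp Require Import boolp reals.
From mathcomp Require Import zify.
Import Order.TTheory GRing.Theory Num.Theory.
Set Implicit Arguments. Unset Strict Implicit. Unset Printing Implicit Defensive.

(* Every table has |P^2| >= 3, so both bits begin some encoded sequence from
   every table, and the disjointness condition of F_2-dec leaves at most one
   element in \bar P^2_{F,i}(f_i(a)).  Hence whenever f_i(a) is a proper prefix
   of f_i(b), f_i(b) extends f_i(a) by at least two bits, and these two bits
   depend only on f_i(a).  So every piece gamma(s_r) with r >= 2 has length at
   least 2 and overwriting its first two bits by 00 loses no information, while
   the first piece is recoded by a map with a prefix-monotone left inverse built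
   from the pair missing from P^2_{F,i}.  Comparing the gamma-chains of s and s'
   at their first difference then gives (iii). *)

Section PrefixComparable.
Variable T : eqType.
Implicit Types a b c u v w : seq T.

Definition prefix_cmp a b := prefix a b || prefix b a.

Lemma prefix_catl2 c a b : prefix (c ++ a) (c ++ b) = prefix a b.
Proof. by rewrite prefix_catr // eqxx. Qed.

Lemma prefix_cmp_catl c a b : prefix_cmp (c ++ a) (c ++ b) = prefix_cmp a b.
Proof. by rewrite /prefix_cmp !prefix_catl2. Qed.

Lemma size_prefix_lt a b : prefix a b -> a != b -> size a < size b.
Proof.
case/prefixP => -[|x t] ->; first by rewrite cats0 eqxx.
by rewrite size_cat /= addnS ltnS leq_addr.
Qed.

Lemma prefix_common_leq a b w :
  prefix a w -> prefix b w -> size a <= size b -> prefix a b.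
Proof.
rewrite !prefixE => /eqP wa /eqP wb le.
by rewrite -wb take_takel // wa.
Qed.

Lemma prefix_common_cmp a b w : prefix a w -> prefix b w -> prefix_cmp a b.
Proof.
move=> aw bw; rewrite /prefix_cmp.
have [le|/ltnW le] := leqP (size a) (size b).
  by rewrite (prefix_common_leq aw bw le).
by rewrite (prefix_common_leq bw aw le) orbT.
Qed.

Lemma prefix_cat_cmp a b u v : prefix (a ++ u) (b ++ v) -> prefix_cmp a b.
Proof.
move=> pre; apply: (@prefix_common_cmp _ _ (b ++ v)); last exact: prefix_prefix.
exact: prefix_trans (prefix_prefix a u) pre.
Qed.

Lemma cat_flatten_pairmap_drop u L :
  path (@prefix T) u L ->
  u ++ flatten (pairmap (fun v w => drop (size v) w) u L) = last u L.
Proof.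
elim: L u => [|v L IHL] u /=; first by rewrite cats0.
by case/andP => /prefixP[t ->] /IHL <-; rewrite drop_size_cat // catA.
Qed.

Variant common_prefix_spec (L L' : seq T) : Prop :=
| CommonPrefixL Q of L' = L ++ Q
| CommonPrefixR y Q of L = L' ++ y :: Q
| CommonPrefixDiverge P x y Q Q' of x != y & L = P ++ x :: Q & L' = P ++ y :: Q'.

Lemma common_prefixP L L' : common_prefix_spec L L'.
Proof.
elim: L L' => [|x L IHL] [|y L'].
- by apply: (CommonPrefixL (Q := [::])).
- by apply: (CommonPrefixL (Q := y :: L')).
- by apply: (CommonPrefixR (y := x) (Q := L)).
have [<-|ne] := eqVneq x y; last by apply: (CommonPrefixDiverge (P := [::]) ne).
case: (IHL L') => [Q ->|z Q ->|P u v Q Q' ne -> ->].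
- exact: (CommonPrefixL (Q := Q)).
- exact: (CommonPrefixR (y := z) (Q := Q)).
- exact: (CommonPrefixDiverge (P := x :: P) ne).
Qed.

End PrefixComparable.

Lemma pair_meets_large_set (T : finType) (A : {set T}) (q1 q2 : T) :
  #|T| <= #|A| + 1 -> q1 != q2 -> (q1 \in A) || (q2 \in A).
Proof.
move=> largeA q12; apply: contraTT largeA; rewrite negb_or -ltnNge => /andP[q1A q2A].
have : [set q1; q2] \subset ~: A.
  by apply/subsetP => x; rewrite !inE => /orP[]/eqP->.
move/subset_leq_card; rewrite cards2 q12 -(cardsC A); lia.
Qed.

Section CodeTuple.
Variables (S : finType) (m : nat) (F : codeTuple S m).
Hypotheses (F_dec : dec2 F) (F_P2 : forall j, 3 <= card_P2 F j).

Definition P2set (j : 'I_m) : {set bool * bool} :=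
  [set c | `[< Pset F j 2 [::] [:: c.1; c.2] >]].

Lemma card_P2set j : card_P2 F j = #|P2set j|.
Proof. by []. Qed.

Lemma P2set_meets_pair j q1 q2 : q1 != q2 -> (q1 \in P2set j) || (q2 \in P2set j).
Proof.
apply: pair_meets_large_set; rewrite card_prod card_bool.
by have := F_P2 j; rewrite card_P2set addn1.
Qed.

Lemma fstar_starts_with j d : exists a x e, prefix [:: d; e] (fstar F j (a :: x)).
Proof.
have /orP[] : ((d, false) \in P2set j) || ((d, true) \in P2set j).
  by apply: P2set_meets_pair; rewrite xpair_eqE eqxx.
all: by rewrite inE => /asboolP[_ [a [x [pre _]]]]; do 3 eexists; exact: pre.
Qed.

Variable i : 'I_m.
Local Notation f := (ct_f F i).

Lemma Pbar2_uniq a c1 c2 : Pbar F i 2 (f a) c1 -> Pbar F i 2 (f a) c2 -> c1 = c2.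
Proof.
have pair2 c : Pbar F i 2 (f a) c -> c = [:: nth false c 0; nth false c 1].
  by case; case: c => [|x [|y []]].
move=> /[dup] /pair2 -> + /[dup] /pair2 ->.
move: (nth _ c1 0) (nth _ c1 1) (nth _ c2 0) (nth _ c2 1) => x1 y1 x2 y2 Pc1 Pc2.
have [[-> ->] // | q12] := eqVneq (x1, y1) (x2, y2).
have /orP[] := P2set_meets_pair (ct_tau F i a) q12; rewrite inE => /asboolP P2q.
  by case: (F_dec.1 i a _ (conj P2q Pc1)).
by case: (F_dec.1 i a _ (conj P2q Pc2)).
Qed.

Lemma codeword_ext a b : prefix (f a) (f b) -> f a != f b ->
  exists g1 g2 t, f b = f a ++ [:: g1, g2 & t] /\ Pbar F i 2 (f a) [:: g1; g2].
Proof.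
move=> ab ne; have Pbar_ext c x :
    size c = 2 -> prefix (f a ++ c) (fstar F i (b :: x)) -> Pbar F i 2 (f a) c.
  by move=> c2 pre; split => //; exists b, x; rewrite ab ne.
case/prefixP: ab ne => -[|g1 [|g2 t]] fb ne; first by rewrite fb cats0 eqxx in ne.
  have Pbar_g1 d : Pbar F i 2 (f a) [:: g1; d].
    have [a' [x [e de]]] := fstar_starts_with (ct_tau F i b) d.
    apply: (Pbar_ext _ (a' :: x)) => //.
    rewrite [fstar _ _ _]/= fb -(catA (f a)) prefix_catl2 /= eqxx.
    exact: (catl_prefix (s3 := [:: e])).
  by have := Pbar2_uniq (Pbar_g1 false) (Pbar_g1 true).
exists g1, g2, t; split => //; apply: (Pbar_ext _ [::]) => //=.
by rewrite cats0 fb; apply/prefixP; exists t; rewrite -catA.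
Qed.

Local Notation chain := (gchain F i).

Lemma gchain_mem s x : x \in chain s -> exists2 a, x = f a & prefix x (f s).
Proof.
rewrite /gchain mem_cat mem_sort mem_undup inE => /orP[/mapP[a] | /eqP ->].
  by rewrite mem_filter => /andP[/andP[pre _] _] ->; exists a.
by exists s => //; exact: prefix_refl.
Qed.

Lemma gchain_complete s a : prefix (f a) (f s) -> f a \in chain s.
Proof.
move=> pre; rewrite /gchain mem_cat inE.
have [-> | ne] := eqVneq (f a) (f s); first by rewrite orbT.
by rewrite mem_sort mem_undup map_f // mem_filter pre ne mem_enum.
Qed.

Lemma gchain_sorted s : pairwise (fun u v : seq bool => size u < size v) (chain s).
Proof.
rewrite /gchain; set l := undup _.
have l_pre x : x \in l -> prefix x (f s) && (x != f s).
  by rewrite mem_undup => /mapP[a]; rewrite mem_filter => /andP[pre _] ->.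
rewrite pairwise_cat /= andbT; apply/andP; split.
  apply/allrelP => x y; rewrite mem_sort inE => /l_pre /andP[pre ne] /eqP ->.
  exact: size_prefix_lt.
set ls := sort _ l.
have : pairwise [rel x y | (size x <= size y) && (x != y)] ls.
  rewrite pairwise_relI -uniq_pairwise sort_uniq undup_uniq andbT.
  rewrite -sorted_pairwise; last by move=> y x z; apply: leq_trans.
  by apply: sort_sorted => x y; apply: leq_total.
apply: (sub_in_pairwise (P := fun x => prefix x (f s))) => [x y xs ys /andP[le ne]|].
  exact: size_prefix_lt (prefix_common_leq xs ys le) ne.
by apply/allP => x; rewrite mem_sort => /l_pre /andP[].
Qed.

Lemma gchain_cat_lt s P Q u v :
  chain s = P ++ Q -> u \in P -> v \in Q -> size u < size v.
Proof.
move=> E uP vQ; have := gchain_sorted s; rewrite E pairwise_cat.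
by case/and3P => /allrelP lt _ _; exact: lt.
Qed.

Lemma gchain_ext s u v : u \in chain s -> v \in chain s -> size u < size v ->
  exists g1 g2 t, v = u ++ [:: g1, g2 & t] /\ Pbar F i 2 u [:: g1; g2].
Proof.
case/gchain_mem => a -> us /gchain_mem[b -> vs] lt.
apply: codeword_ext; first exact: prefix_common_leq us vs (ltnW lt).
by apply: contraTneq lt => ->; rewrite ltnn.
Qed.

Lemma gchain_path s : path (@prefix bool) [::] (chain s).
Proof.
case E: (chain s) => [|x L] //=; rewrite prefix0s /=.
apply: (@sub_in_path _ (mem (chain s)) (fun u v : seq bool => size u < size v)).
- move=> u v /gchain_mem[a -> us] /gchain_mem[b -> vs] lt.
  exact: prefix_common_leq us vs (ltnW lt).
- by rewrite E; apply/allP.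
- by have := pairwise_sorted (gchain_sorted s); rewrite E.
Qed.

Lemma flatten_gpieces s : flatten (gpieces F i s) = f s.
Proof.
rewrite /gpieces -[LHS]cat0s cat_flatten_pairmap_drop ?gchain_path //.
by rewrite /gchain last_cat.
Qed.

Lemma size_ddgamma0 g : size (ddgamma F i 0 g) = size g.
Proof.
rewrite /ddgamma /=; case: ifP => // _; case: ifP => // _.
by case: g => [|g1 [|g2 t]] //=; case: ifP => //=; rewrite drop0.
Qed.

Lemma size_gpiece_ge2 s r :
  0 < r < size (gpieces F i s) -> 1 < size (nth [::] (gpieces F i s) r).
Proof.
case: r => [//|r]; rewrite /gpieces size_pairmap => /= lt.
rewrite (nth_pairmap [::] [::] _ lt) /=.
have uS : nth [::] (chain s) r \in chain s by exact/mem_nth/ltnW.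
have vS : nth [::] (chain s) r.+1 \in chain s by exact: mem_nth.
have /(gchain_ext uS vS)[g1 [g2 [t [-> _]]]] :
    size (nth [::] (chain s) r) < size (nth [::] (chain s) r.+1).
  by apply: (pairwiseP [::] (gchain_sorted s)); rewrite // inE ltnW.
by rewrite drop_size_cat.
Qed.

Lemma size_ddgamma_gpiece s r : r < size (gpieces F i s) ->
  size (ddgamma F i r (nth [::] (gpieces F i s) r)) = size (nth [::] (gpieces F i s) r).
Proof.
case: r => [_|r lt]; first exact: size_ddgamma0.
by rewrite /ddgamma /= size_drop -addn2 subnK // size_gpiece_ge2.
Qed.

Lemma size_ddf s : size (ddf F i s) = size (f s).
Proof.
rewrite -(flatten_gpieces s) /ddf !size_flatten /shape -map_comp.
rewrite -{3}(mkseq_nth [::] (gpieces F i s)) /mkseq -map_comp.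
congr sumn; apply/eq_in_map => r; rewrite mem_iota => /= lt.
exact: size_ddgamma_gpiece.
Qed.

Fixpoint ddchain (n : nat) (u : seq bool) (L : seq (seq bool)) : seq bool :=
  if L is v :: L' then ddgamma F i n (drop (size u) v) ++ ddchain n.+1 v L' else [::].

Lemma ddf_ddchain s : ddf F i s = ddchain 0 [::] (chain s).
Proof.
suff gen n u L : flatten [seq ddgamma F i (n + r)
    (nth [::] (pairmap (fun u v : seq bool => drop (size u) v) u L) r)
    | r <- iota 0 (size L)] = ddchain n u L.
  by rewrite -(gen 0) /ddf /gpieces size_pairmap.
elim: L u n => [|v L IHL] u n //=.
rewrite addn0 -(IHL v n.+1) -[1]/(1 + 0) iotaDl -map_comp.
congr (_ ++ flatten _); apply: eq_map => r /=.
by rewrite add1n addSnnS.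
Qed.

Lemma ddchain_cat n u P Q :
  ddchain n u (P ++ Q) = ddchain n u P ++ ddchain (n + size P) (last u P) Q.
Proof.
elim: P n u => [|v P IHP] n u /=; first by rewrite addn0.
by rewrite IHP catA addSnnS.
Qed.

Lemma gchain_diverge s s' P x y Q Q' :
  chain s = P ++ x :: Q -> chain s' = P ++ y :: Q' -> x != y -> ~~ prefix_cmp x y.
Proof.
suff no_proper_prefix s1 s2 u v Q1 Q2 :
    chain s1 = P ++ u :: Q1 -> chain s2 = P ++ v :: Q2 -> prefix u v -> u = v.
  move=> E E' ne; apply/norP; split; apply/negP => pre; move/eqP: ne; apply.
    exact: no_proper_prefix E E' pre.
  exact/esym/(no_proper_prefix _ _ _ _ _ _ E' E pre).
move=> E1 E2 uv; apply/eqP; apply: contraT => ne.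
have /gchain_mem[a ua _] : u \in chain s1 by rewrite E1 mem_cat mem_head orbT.
have /gchain_mem[_ _ vs2] : v \in chain s2 by rewrite E2 mem_cat mem_head orbT.
have : u \in chain s2 by rewrite ua gchain_complete // -ua (prefix_trans uv vs2).
rewrite E2 mem_cat inE => /or3P[uP | /eqP uv' | uQ2].
- by have := gchain_cat_lt E1 uP (mem_head u Q1); rewrite ltnn.
- by rewrite uv' eqxx in ne.
have E2' : chain s2 = rcons P v ++ Q2 by rewrite E2 cat_rcons.
have vP : v \in rcons P v by rewrite mem_rcons mem_head.
have := gchain_cat_lt E2' vP uQ2.
by rewrite ltnNge size_prefix.
Qed.

Lemma P2set_missing_uniq q q' : q \notin P2set i -> q' \notin P2set i -> q' = q.
Proof.
move=> qA q'A; apply/eqP; apply: contraT => ne.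
by have := P2set_meets_pair i ne; rewrite (negbTE qA) (negbTE q'A).
Qed.

Lemma P2set_codeword a g1 g2 t : f a = [:: g1, g2 & t] -> (g1, g2) \in P2set i.
Proof.
move=> fa; rewrite inE; apply/asboolP; split => //; exists a, [::].
by rewrite prefix0s /= fa /= !eqxx prefix0s.
Qed.

Lemma P2set_codeword1 a g1 d : f a = [:: g1] -> (g1, d) \in P2set i.
Proof.
move=> fa; have [a' [x [e de]]] := fstar_starts_with (ct_tau F i a) d.
rewrite inE; apply/asboolP; split => //; exists a, (a' :: x).
rewrite prefix0s [fstar _ _ _]/= fa /= eqxx; split => //.
exact: (catl_prefix (s3 := [:: e])).
Qed.

Lemma head_of_full_row g1 q :
  q \notin P2set i -> (forall d, (g1, d) \in P2set i) -> g1 = ~~ q.1.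
Proof.
case: q => q1 q2 /= qA full.
have [e|] := eqVneq g1 q1; first by rewrite -e full in qA.
by case: g1 q1 {qA full} => [] [].
Qed.

(* Left inverse of [ddgamma F i 0] on nonempty codewords when [q] is the pair
   missing from P^2_{F,i}. *)
Definition undd0 (q : bool * bool) (d : seq bool) : seq bool :=
  match d with
  | true :: t => ~~ q.1 :: t
  | [:: false] => [:: q.1]
  | false :: _ :: t => q.1 :: ~~ q.2 :: t
  | [::] => [::]
  end.

Lemma undd0_prefix q d d' : prefix d d' -> prefix (undd0 q d) (undd0 q d').
Proof.
case/prefixP => e ->; case: d => [|[] [|x t]] //=; rewrite ?eqxx ?prefix_prefix //.
by case: e => [|x e] /=; rewrite eqxx.
Qed.

Lemma undd0_ddgamma0 q a R : card_P2 F i = 3 -> q \notin P2set i -> f a != [::] ->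
  undd0 q (ddgamma F i 0 (f a) ++ R) = f a ++ R.
Proof.
move=> c3 qA; rewrite /ddgamma /= c3 /=.
case fa: (f a) => [|g1 [|g2 t]] // _.
  by rewrite /= (head_of_full_row qA (fun d => P2set_codeword1 d fa)).
have g12 := P2set_codeword fa.
case: ifP => g1n2.
  have g1n2' : (g1, ~~ g2) \in P2set i by rewrite inE.
  have full d : (g1, d) \in P2set i by case: d g2 {fa g1n2} g12 g1n2' => [] [].
  by rewrite /= (head_of_full_row qA full).
have g1n2' : (g1, ~~ g2) \notin P2set i by rewrite inE g1n2.
by rewrite -(P2set_missing_uniq qA g1n2') /= drop0 negbK.
Qed.

Lemma ddgamma0_prefix_cmp a a' R R' :
  prefix (ddgamma F i 0 (f a) ++ R) (ddgamma F i 0 (f a') ++ R') ->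
  prefix_cmp (f a) (f a').
Proof.
have [c3 | c_ne3] := eqVneq (card_P2 F i) 3; last first.
  by rewrite /ddgamma /= (negbTE c_ne3); case: ifP => _; apply: prefix_cat_cmp.
have /card_gt0P[q] : 0 < #|~: P2set i|.
  by move: (cardsC (P2set i)) c3; rewrite card_prod card_bool card_P2set; lia.
rewrite inE => qA.
have [-> _ | fa] := eqVneq (f a) [::]; first by rewrite /prefix_cmp prefix0s.
have [-> _ | fa'] := eqVneq (f a') [::]; first by rewrite /prefix_cmp prefix0s orbT.
by move/(undd0_prefix q); rewrite !undd0_ddgamma0 //; apply: prefix_cat_cmp.
Qed.

Lemma ddgammaS_prefix_cmp n a c c' t t' R R' :
  Pbar F i 2 (f a) c -> Pbar F i 2 (f a) c' ->
  prefix (ddgamma F i n.+1 (c ++ t) ++ R) (ddgamma F i n.+1 (c' ++ t') ++ R') ->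
  prefix_cmp (f a ++ c ++ t) (f a ++ c' ++ t').
Proof.
move=> Pc /(Pbar2_uniq Pc) <-; have [c2 _] := Pc.
rewrite /ddgamma /= !drop_size_cat // !prefix_cmp_catl.
exact: prefix_cat_cmp.
Qed.

Lemma ddf_diverge_cmp s s' P x y Q Q' :
  chain s = P ++ x :: Q -> chain s' = P ++ y :: Q' ->
  prefix (ddf F i s) (ddf F i s') -> prefix_cmp x y.
Proof.
move=> E E'; have xS : x \in chain s by rewrite E mem_cat mem_head orbT.
have yS : y \in chain s' by rewrite E' mem_cat mem_head orbT.
rewrite !ddf_ddchain E E' !ddchain_cat /= prefix_catl2.
case/lastP: P E E' => [|P b] E E' /=.
  have [a -> _] := gchain_mem xS; have [a' -> _] := gchain_mem yS.
  rewrite !drop0; exact: ddgamma0_prefix_cmp.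
have bP : b \in rcons P b by rewrite mem_rcons mem_head.
have bS : b \in chain s by rewrite E mem_cat bP.
have bS' : b \in chain s' by rewrite E' mem_cat bP.
have [g1 [g2 [t [-> Pg]]]] :=
  gchain_ext bS xS (gchain_cat_lt E bP (mem_head x Q)).
have [g1' [g2' [t' [-> Pg']]]] :=
  gchain_ext bS' yS (gchain_cat_lt E' bP (mem_head y Q')).
have [a0 b_a0 _] := gchain_mem bS; rewrite b_a0 in Pg Pg' *.
rewrite last_rcons size_rcons add0n !drop_size_cat //.
exact: (ddgammaS_prefix_cmp (t := t) (t' := t') Pg Pg').
Qed.

Lemma gchain_proper_size s s' y Q :
  chain s = chain s' ++ y :: Q -> size (f s') < size (f s).
Proof.
move=> E; have fs' : f s' \in chain s' by apply/gchain_complete/prefix_refl.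
have /gchain_mem[_ _ ys] : y \in chain s by rewrite E mem_cat mem_head orbT.
exact: leq_trans (gchain_cat_lt E fs' (mem_head y Q)) (size_prefix ys).
Qed.

Lemma gchain_catr_prefix s s' Q : chain s' = chain s ++ Q -> prefix (f s) (f s').
Proof.
move=> E; have : f s \in chain s' by rewrite E mem_cat gchain_complete ?prefix_refl.
by case/gchain_mem.
Qed.

Lemma prefix_gchain s s' : prefix (f s) (f s') -> exists Q, chain s' = chain s ++ Q.
Proof.
move=> ss'.
case: (common_prefixP (chain s) (chain s')) => [Q E | y Q E | P x y Q Q' ne E E'].
- by exists Q.
- by have := gchain_proper_size E; rewrite ltnNge size_prefix.
have /gchain_mem[_ _ xs] : x \in chain s by rewrite E mem_cat mem_head orbT.
have /gchain_mem[_ _ ys'] : y \in chain s' by rewrite E' mem_cat mem_head orbT.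
by have := gchain_diverge E E' ne; rewrite (prefix_common_cmp (prefix_trans xs ss') ys').
Qed.

Lemma prefix_ddf s s' : prefix (f s) (f s') <-> prefix (ddf F i s) (ddf F i s').
Proof.
split => [/prefix_gchain[Q E] | pre].
  by rewrite !ddf_ddchain E ddchain_cat prefix_prefix.
case: (common_prefixP (chain s) (chain s')) => [Q E | y Q E | P x y Q Q' ne E E'].
- exact: gchain_catr_prefix E.
- by have := gchain_proper_size E; rewrite -!size_ddf ltnNge size_prefix.
- by have := gchain_diverge E E' ne; rewrite (ddf_diverge_cmp E E' pre).
Qed.

End CodeTuple.

Local Open Scope ring_scope.

Theorem lemma25 (R : realType) (S : finType) (m : nat) (mu : S -> R)
    (F : codeTuple S m) (i : 'I_m) :
  (2 <= #|S|)%N -> (0 < m)%N ->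
  (forall s, 0 < mu s <= 1) -> \sum_s mu s = 1 ->
  inF2 mu F ->
  [/\ (forall (s : S) (r : nat), (r < size (gpieces F i s))%N ->
         size (ddgamma F i r (nth [::] (gpieces F i s) r))
         = size (nth [::] (gpieces F i s) r)),
      (forall s : S, size (ddf F i s) = size (ct_f F i s)) &
      (forall s s' : S,
         prefix (ct_f F i s) (ct_f F i s') <-> prefix (ddf F i s) (ddf F i s'))].
Proof.
move=> _ _ _ _ [_ [F_dec F_P2]]; split.
- exact: size_ddgamma_gpiece.
- exact: size_ddf.
- exact: prefix_ddf.
Qed.
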